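(* Let $x$ and $y$ be two infinite words over a finite alphabet $A$. Suppose there are symbols $c,c',d\in A$ and an increasing sequence of integers $(m_n)_{n\ge0}$ such that the limits $$\lim_{n\to\infty}\frac{|\{1\le i\le m_n: x[i]=c,\ y[i]=d\}|}{m_n}\quad\text{and}\quad \lim_{n\to\infty}\frac{|\{1\le i\le m_n: x[i]=c',\ y[i]=d\}|}{m_n}$$ exist and are different. Then $\rho(x/y)<1$.
   Context: $x[i]$ is the symbol at position $i$ (positions start at 1). A $k$-automaton $\langle Q,A,\delta,I\rangle$ has finite state set $Q$, transitions $\delta\subseteq Q\times(A\cup\{\varepsilon\})^k\times Q$, initial states $I$; an infinite run is accepting if it starts in $I$ and all label components are infinite. It is $2$-deterministic if $I$ is a singleton and, for two transitions from the same state with labels $(\alpha_i),(\alpha'_i)$, $\alpha_j=\varepsilon$ for some $j\le2$ implies $\alpha'_j=\varepsilon$, and $\alpha_1=\alpha'_1,\alpha_2=\alpha'_2$ implies $\alpha_3=\alpha'_3$ and equal targets. A compressor is a $2$-deterministic $3$-automaton $\mathcal C$ (input $x$, oracle $y$, output) such that for each fixed $y$ the map $x\mapsto\mathcal C(x,y)$ is injective. For the accepting run $q_0\xrightarrow{\alpha_1,\beta_1|w_1}q_1\cdots$ with $x=\alpha_1\alpha_2\cdots$, $y=\beta_1\beta_2\cdots$, $\rho_{\mathcal C}(x/y)=\liminf_n|w_1\cdots w_n|/|\alpha_1\cdots\alpha_n|$; $\rho(x/y)$ is the infimum over all compressors. *)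

From HB Require Import structures.
From mathcomp Require Import all_boot all_order all_algebra.
From mathcomp Require Import all_classical all_reals all_analysis.
Set Implicit Arguments. Unset Strict Implicit. Unset Printing Implicit Defensive.
Import Order.TTheory GRing.Theory Num.Theory.
Local Open Scope classical_set_scope.
Local Open Scope ring_scope.

(* Infinite words over A: w : nat -> A, where w i is the symbol at position i+1. *)

(* A transition label in (A ∪ {eps})^3 : (input, oracle, output); None = eps. *)
Definition label3 (A : finType) := (option A * option A * option A)%type.
Definition lab1 (A : finType) (l : label3 A) := l.1.1.
Definition lab2 (A : finType) (l : label3 A) := l.1.2.
Definition lab3 (A : finType) (l : label3 A) := l.2.

Record automaton3 (A : finType) (Q : finType) := Automaton3 {
  delta : Q -> label3 A -> Q -> bool;
  init : Q -> bool }.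

Definition two_deterministic (A Q : finType) (C : automaton3 A Q) : Prop :=
  (exists q0, forall q, init C q <-> q = q0) /\
  (forall p (a b : label3 A) q q', delta C p a q -> delta C p b q' ->
     (lab1 a = None -> lab1 b = None) /\ (lab2 a = None -> lab2 b = None) /\
     (lab1 a = lab1 b -> lab2 a = lab2 b -> lab3 a = lab3 b /\ q = q')).

Definition nsyms (A : finType) (s : nat -> option A) (n : nat) : nat :=
  \sum_(i < n) (s i != None).

(* the tape s (a sequence of labels in A ∪ {eps}) spells the infinite word w:
   infinitely many non-eps labels, and their concatenation is w *)
Definition spells (A : finType) (s : nat -> option A) (w : nat -> A) : Prop :=
  (forall N, exists k, (N <= k)%N /\ s k != None) /\
  (forall k a, s k = Some a -> w (nsyms s k) = a).

Definition accepting_run (A Q : finType) (C : automaton3 A Q)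
    (qs : nat -> Q) (ls : nat -> label3 A) (x y z : nat -> A) : Prop :=
  init C (qs 0%N) /\
  (forall k, delta C (qs k) (ls k) (qs k.+1)) /\
  spells (fun k => lab1 (ls k)) x /\
  spells (fun k => lab2 (ls k)) y /\
  spells (fun k => lab3 (ls k)) z.

Definition compressor (A Q : finType) (C : automaton3 A Q) : Prop :=
  two_deterministic C /\
  (forall y x x' z qs ls qs' ls',
     accepting_run C qs ls x y z -> accepting_run C qs' ls' x' y z -> x = x').

Definition run_ratio (R : realType) (A : finType) (ls : nat -> label3 A) (n : nat) : \bar R :=
  ((nsyms (fun k => lab3 (ls k)) n)%:R / (nsyms (fun k => lab1 (ls k)) n)%:R)%:E.

(* The set of values rho_C(x/y) = liminf of run_ratio, over all compressors C
   (state sets taken to be 'I_n, which loses no generality) and their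
   accepting runs on (x, y). *)
Definition rho_values (R : realType) (A : finType) (x y : nat -> A) : set (\bar R) :=
  [set r | exists (n : nat) (C : automaton3 A 'I_n) qs ls z,
     compressor C /\ accepting_run C qs ls x y z /\
     r = limn_einf (@run_ratio R A ls)].

Definition rho (R : realType) (A : finType) (x y : nat -> A) : \bar R :=
  ereal_inf (@rho_values R A x y).

(* |{1 <= i <= m : x[i] = c, y[i] = d}| / m  (positions shifted to 0-based) *)
Definition joint_freq (R : realType) (A : finType) (x y : nat -> A) (c d : A) (m : nat) : R :=
  (#|[set i : 'I_m | (x i == c) && (y i == d)]|)%:R / m%:R.

From HB Require Import structures.
From mathcomp Require Import all_boot all_order all_algebra.
From mathcomp Require Import all_classical all_reals all_analysis.
From mathcomp Require Import zify lra.
Import Order.TTheory GRing.Theory Num.Theory.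
Import numFieldNormedType.Exports.
Set Implicit Arguments. Unset Strict Implicit. Unset Printing Implicit Defensive.
Local Open Scope classical_set_scope.

(* Let disc(b, a) = [b = d] ([a = c] - [a = c']), so that D_N = sum_{i < N} disc(y_i, x_i)
   is N times the difference of the two frequencies. Assuming l > l' (the other case is
   symmetric), D_N > eps N for infinitely many N, with eps = (l - l') / 2.
   Cut x and y into blocks of length L. For a fixed oracle block w, the input blocks u whose
   discrepancy sum_i disc(w_i, u_i) reaches t = eps L / 2 are rare: their second moment over
   all u is at most 2 L |A|^L, so by Chebyshev there are at most |A|^(L - e) of them once
   8 |A|^e <= eps^2 L. The compressor reads a block and writes c followed by the rank of u
   among these good blocks (L - e + 1 letters) when u is good, and c' u (L + 1 letters)
   otherwise. When D_N > eps N, at least about eps / 2 of the first N / L blocks are good,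
   so with e eps >= 6 the output has at most L - 1 letters per block, and
   rho(x/y) <= 1 - 1/L. *)

Section Tapes.
Variables (A : finType) (s : nat -> option A).

Lemma nsymsS n : nsyms s n.+1 = (nsyms s n + (s n != None))%N.
Proof. by rewrite /nsyms big_ord_recr. Qed.

Lemma eq_nsyms (s' : nat -> option A) n :
  (forall k, (k < n)%N -> s k = s' k) -> nsyms s n = nsyms s' n.
Proof. by move=> eq_s; apply: eq_bigr => i _; rewrite eq_s. Qed.

Lemma leq_nsyms : {homo nsyms s : k k' / (k <= k')%N}.
Proof.
move=> k k' /subnKC <-; elim: (k' - k)%N => [|i IH]; first by rewrite addn0.
by rewrite addnS nsymsS; lia.
Qed.

Lemma nsyms_inj k k' :
  s k != None -> s k' != None -> nsyms s k = nsyms s k' -> k = k'.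
Proof.
wlog le_kk' : k k' / (k <= k')%N.
  move=> W sk sk' e; case: (leqP k k') => [|/ltnW] le; first exact: W.
  by apply/esym/W.
move=> sk _ e; apply/eqP; rewrite eqn_leq le_kk' leqNgt; apply/negP => lt_kk'.
by have := leq_nsyms lt_kk'; rewrite nsymsS sk -e; lia.
Qed.

Lemma spells_exists (a0 : A) :
  (forall N, exists k, (N <= k)%N /\ s k != None) -> exists w, spells s w.
Proof.
move=> inf_s.
exists (fun i => xget a0 [set a | exists k, s k = Some a /\ nsyms s k = i]).
split => // k a ska; case: xgetP => [b _ [k' [skb e]]|/(_ a)]; last first.
  by case; exists k.
have e' : k' = k by apply: nsyms_inj; rewrite ?skb ?ska.
by move: skb; rewrite e' ska => -[].
Qed.

End Tapes.

Lemma prefix_of_stream (T : eqType) (t0 : T) (f : nat -> T) (s1 s2 : seq T) :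
  (forall i, (i < size s1)%N -> f i = nth t0 s1 i) ->
  (forall i, (i < size s2)%N -> f i = nth t0 s2 i) -> prefix s1 s2 || prefix s2 s1.
Proof.
wlog le12 : s1 s2 / (size s1 <= size s2)%N.
  move=> W f1 f2; case: (leqP (size s1) (size s2)) => [|/ltnW] le; first exact: W.
  by rewrite orbC; apply: W.
move=> f1 f2; rewrite prefixE; apply/orP; left; apply/eqP.
apply: (@eq_from_nth _ t0); first by rewrite size_takel.
move=> i; rewrite size_takel // => lt_i.
by rewrite nth_take // -f2 ?f1 //; apply: leq_trans le12.
Qed.

Lemma prefix_size_eq (T : eqType) (s1 s2 : seq T) :
  size s1 = size s2 -> prefix s1 s2 -> s1 = s2.
Proof. by rewrite prefixE => ->; rewrite take_size => /eqP. Qed.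

Section OrdinalStates.
Variables (A Q : finType) (C : automaton3 A Q).

Definition ord_automaton : automaton3 A 'I_#|Q| :=
  Automaton3 (fun p l q => delta C (enum_val p) l (enum_val q))
             (fun q => init C (enum_val q)).

Lemma accepting_run_to_ord qs ls x y z : accepting_run C qs ls x y z ->
  accepting_run ord_automaton (enum_rank \o qs) ls x y z.
Proof. by case=> i0 [run spl]; split; [|split=> // k]; rewrite /= ?enum_rankK. Qed.

Lemma accepting_run_of_ord qs ls x y z : accepting_run ord_automaton qs ls x y z ->
  accepting_run C (enum_val \o qs) ls x y z.
Proof. by case=> i0 [run spl]; split. Qed.

Lemma ord_compressor : compressor C -> compressor ord_automaton.
Proof.
case=> [[[q0 init_q0] det] inj]; split; first split.
- exists (enum_rank q0) => q /=; rewrite init_q0; split=> [<-|->].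
    by rewrite enum_valK.
  by rewrite enum_rankK.
- move=> p a b q q' /= dqa dqb; have [? [? det_ab]] := det _ _ _ _ _ dqa dqb.
  do 2!split=> //; move=> e1 e2; have [-> e] := det_ab e1 e2.
  by split=> //; apply: enum_val_inj.
- move=> y x x' z qs ls qs' ls' /accepting_run_of_ord run /accepting_run_of_ord run'.
  exact: inj run run'.
Qed.

End OrdinalStates.

Lemma rho_le_run (R : realType) (A Q : finType) (C : automaton3 A Q) qs ls x y z :
  compressor C -> accepting_run C qs ls x y z ->
  (rho R x y <= limn_einf (@run_ratio R A ls))%E.
Proof.
move=> comp run; apply: ereal_inf_lbound.
by exists #|Q|, (ord_automaton C), (enum_rank \o qs), ls, z;
  split; [apply: ord_compressor|split; [apply: accepting_run_to_ord|]].
Qed.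

Lemma limn_einf_le_frequently (R : realType) (u : nat -> \bar R) (r : \bar R) :
  (forall N, exists2 n, (N <= n)%N & (u n <= r)%E) -> (limn_einf u <= r)%E.
Proof.
move=> freq; rewrite limn_einf_lim; apply: lime_le; first exact: is_cvg_einfs.
apply: nearW => N; have [n Nn un] := freq N.
by apply: le_trans un; apply: ereal_inf_lbound; exists n.
Qed.

Section BlockCompressor.
Variables (A : finType) (L : nat) (a0 : A) (code : seq A -> seq A -> seq A).
Hypothesis L_gt0 : (0 < L)%N.
Hypothesis size_code : forall w u, size u = L -> (0 < size (code w u) <= L.+1)%N.
Hypothesis code_prefix_free : forall w u u', size u = L -> size u' = L ->
  prefix (code w u) (code w u') -> u = u'.

(* A period of the compressor: [L] steps reading input/oracle pairs into a buffer,
   then [L.+1] steps writing [code oracle_block input_block], padded with empty labels. *)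
Local Notation P := (L + L).+1.

Definition buffer := {ffun 'I_L -> A * A}.
Definition bstate := ('I_P * buffer)%type.

Definition buf0 : buffer := [ffun => (a0, a0)].
Definition bstate0 : bstate := (ord0, buf0).

Definition buf_code (buf : buffer) : seq A :=
  code [seq (buf i).2 | i <- enum 'I_L] [seq (buf i).1 | i <- enum 'I_L].

Definition out_symbol (q : bstate) : option A :=
  let cw := buf_code q.2 in
  if (q.1 - L < size cw)%N then Some (nth a0 cw (q.1 - L)) else None.

Definition next_phase (r : 'I_P) : 'I_P := inord (if r.+1 == P then 0 else r.+1).

Definition block_label (q : bstate) (X Y : A) : label3 A :=
  if (q.1 < L)%N then (Some X, Some Y, None) else (None, None, out_symbol q).

Definition block_next (q : bstate) (X Y : A) : bstate :=
  (next_phase q.1,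
   if (q.1 < L)%N then [ffun i : 'I_L => if (i : nat) == q.1 then (X, Y) else q.2 i]
   else if q.1.+1 == P then buf0 else q.2).

Definition block_delta (q : bstate) (l : label3 A) (q' : bstate) : bool :=
  [exists X, exists Y, (l == block_label q X Y) && (q' == block_next q X Y)].

Definition block_automaton : automaton3 A bstate :=
  Automaton3 block_delta (pred1 bstate0).

Lemma block_deltaE q X Y : block_delta q (block_label q X Y) (block_next q X Y).
Proof. by apply/existsP; exists X; apply/existsP; exists Y; rewrite !eqxx. Qed.

Lemma block_delta_read q l q' X Y : block_delta q l q' ->
  ((q.1 < L)%N -> forall a, lab1 l = Some a -> a = X) ->
  ((q.1 < L)%N -> forall b, lab2 l = Some b -> b = Y) ->
  l = block_label q X Y /\ q' = block_next q X Y.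
Proof.
case/existsP => X' /existsP [Y' /andP [/eqP -> /eqP ->]].
rewrite /block_label /block_next; case: ifP => //= phase_q eX eY.
by rewrite (eX isT X') // (eY isT Y').
Qed.

Lemma block_two_deterministic : two_deterministic block_automaton.
Proof.
split; first by exists bstate0 => q; split => /eqP.
move=> p a b q q' /existsP [X1 /existsP [Y1 /andP [/eqP -> /eqP ->]]].
move=> /existsP [X2 /existsP [Y2 /andP [/eqP -> /eqP ->]]].
rewrite /block_label /block_next /lab1 /lab2 /lab3; case: ifP => //= _.
by split=> //; split=> // -[->] [->].
Qed.

Definition word_block (x : nat -> A) j : seq A := mkseq (fun i => x (j * L + i)%N) L.
Definition codeword x y j : seq A := code (word_block y j) (word_block x j).
Definition out_len x y j : nat := \sum_(i < j) size (codeword x y i).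

(* The unique run on [x, y]: step [k] is phase [k %% P] of period [k %/ P], and reads
   position [read_pos k] of [x] and [y] when [k %% P < L]. *)
Definition canon_buf (x y : nat -> A) j r : buffer :=
  [ffun i : 'I_L => if (i < r)%N then (x (j * L + i)%N, y (j * L + i)%N) else (a0, a0)].
Definition canon_state x y k : bstate := (inord (k %% P), canon_buf x y (k %/ P) (k %% P)).
Definition read_pos k : nat := k %/ P * L + k %% P.
Definition canon_label x y k : label3 A :=
  block_label (canon_state x y k) (x (read_pos k)) (y (read_pos k)).

Lemma size_word_block x j : size (word_block x j) = L.
Proof. exact: size_mkseq. Qed.

Lemma canon_phase x y k : ((canon_state x y k).1 : nat) = k %% P.
Proof. by rewrite /= inordK // ltn_pmod. Qed.

Lemma buf_code_canon x y j r : (L <= r)%N -> buf_code (canon_buf x y j r) = codeword x y j.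
Proof.
move=> le_Lr; rewrite /buf_code /codeword /word_block /mkseq -val_enum_ord -!map_comp.
by congr code; apply: eq_map => i /=; rewrite ffunE (leq_trans (ltn_ord i) le_Lr).
Qed.

Lemma phase_wrap k : (P %| k.+1) = ((k %% P).+1 == P).
Proof.
have -> : k.+1 = (k %/ P * P + (k %% P).+1)%N by rewrite {1}(divn_eq k P) addnS.
rewrite dvdn_addr ?dvdn_mull //.
have := ltn_pmod k (ltn0Sn (L + L)); rewrite leq_eqVlt => /orP [/eqP ->|lt].
  by rewrite dvdnn eqxx.
by rewrite gtnNdvd // ltn_eqF.
Qed.

Lemma canon_state0 x y : canon_state x y 0 = bstate0.
Proof.
by rewrite /canon_state mod0n div0n; congr pair; apply: val_inj; rewrite /= inordK.
Qed.

Lemma canon_stateS x y k :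
  canon_state x y k.+1 = block_next (canon_state x y k) (x (read_pos k)) (y (read_pos k)).
Proof.
rewrite /block_next /next_phase canon_phase /canon_state modnS divnS // phase_wrap.
case: eqP => [wrap|_]; rewrite ?add0n ?add1n.
  have -> : (k %% P < L)%N = false by apply/negbTE; rewrite -leqNgt; lia.
  by congr pair.
case: ltnP => [lt_kL|le_Lk]; congr pair; apply/ffunP => i; rewrite !ffunE.
  by rewrite ltnS leq_eqVlt; case: eqP => [->|].
by rewrite (leq_trans (ltn_ord i) le_Lk) (leq_trans (ltn_ord i)) // leqW.
Qed.

Lemma lab1_canon x y k :
  lab1 (canon_label x y k) = if (k %% P < L)%N then Some (x (read_pos k)) else None.
Proof. by rewrite /canon_label /block_label canon_phase; case: ifP. Qed.

Lemma lab2_canon x y k :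
  lab2 (canon_label x y k) = if (k %% P < L)%N then Some (y (read_pos k)) else None.
Proof. by rewrite /canon_label /block_label canon_phase; case: ifP. Qed.

Lemma lab3_canon x y k : lab3 (canon_label x y k) =
  if (L <= k %% P)%N && (k %% P - L < size (codeword x y (k %/ P)))%N
  then Some (nth a0 (codeword x y (k %/ P)) (k %% P - L)) else None.
Proof.
rewrite /canon_label /block_label canon_phase; case: (leqP L (k %% P)) => //= le_Lk.
by rewrite /out_symbol canon_phase buf_code_canon.
Qed.

Lemma nsyms_canon_in x y k :
  nsyms (fun k => lab1 (canon_label x y k)) k = (k %/ P * L + minn (k %% P) L)%N.
Proof.
elim: k => [|k IH]; first by rewrite /nsyms big_ord0 div0n mod0n mul0n min0n.
rewrite nsymsS IH lab1_canon modnS divnS // phase_wrap.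
by case: ltnP => /= phase_k; case: eqP => /=; lia.
Qed.

Lemma nsyms_canon_oracle x y k :
  nsyms (fun k => lab2 (canon_label x y k)) k = nsyms (fun k => lab1 (canon_label x y k)) k.
Proof. by apply: eq_bigr => i _; rewrite lab1_canon lab2_canon; case: ifP. Qed.

Lemma nsyms_canon_out x y k :
  nsyms (fun k => lab3 (canon_label x y k)) k =
  (out_len x y (k %/ P) + minn (k %% P - L) (size (codeword x y (k %/ P))))%N.
Proof.
elim: k => [|k IH]; first by rewrite /nsyms /out_len !big_ord0 div0n mod0n sub0n min0n.
rewrite nsymsS IH lab3_canon modnS divnS // phase_wrap.
have := size_code (word_block y (k %/ P)) (size_word_block x (k %/ P)).
rewrite -/(codeword x y _) => size_cw.
case: (leqP L (k %% P)) => phase_k;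
  case: (ltnP (k %% P - L) (size (codeword x y (k %/ P)))) => /= out_k;
  by case: eqP => wrap; rewrite ?add0n ?add1n /out_len ?big_ord_recr /=; lia.
Qed.

Lemma canon_spells_in x y : spells (fun k => lab1 (canon_label x y k)) x.
Proof.
split=> [N|k a].
  by exists (N * P)%N; rewrite leq_pmulr // lab1_canon modnMl L_gt0.
rewrite lab1_canon; case: ltnP => // lt_kL [<-].
by rewrite nsyms_canon_in /read_pos; congr x; lia.
Qed.

Lemma canon_spells_oracle x y : spells (fun k => lab2 (canon_label x y k)) y.
Proof.
split=> [N|k b].
  by exists (N * P)%N; rewrite leq_pmulr // lab2_canon modnMl L_gt0.
rewrite lab2_canon; case: ltnP => // lt_kL [<-].
by rewrite nsyms_canon_oracle nsyms_canon_in /read_pos; congr y; lia.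
Qed.

Lemma write_phaseE j t : (t <= L)%N ->
  (j * P + (L + t)) %/ P = j /\ (j * P + (L + t)) %% P = (L + t)%N.
Proof.
move=> le_tL; rewrite divnMDl // modnMDl divn_small ?modn_small ?addn0 //; lia.
Qed.

Lemma canon_out_infinite x y N :
  exists k, (N <= k)%N /\ lab3 (canon_label x y k) != None.
Proof.
exists (N * P + L)%N; split; first by nia.
rewrite lab3_canon; have := write_phaseE N (leq0n L); rewrite addn0 => -[-> ->].
rewrite leqnn subnn.
by have := size_code (word_block y N) (size_word_block x N) => /andP [-> _].
Qed.

Lemma canon_out_codeword x y z : spells (fun k => lab3 (canon_label x y k)) z ->
  forall j t, (t < size (codeword x y j))%N ->
  z (out_len x y j + t)%N = nth a0 (codeword x y j) t.
Proof.
move=> [_ out_z] j t lt_t.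
have le_tL : (t <= L)%N.
  have := size_code (word_block y j) (size_word_block x j).
  by rewrite -/(codeword x y _); lia.
have := out_z (j * P + (L + t))%N (nth a0 (codeword x y j) t).
rewrite lab3_canon nsyms_canon_out; have [-> ->] := write_phaseE j le_tL.
rewrite leq_addr addKn lt_t => /(_ erefl).
by rewrite (minn_idPl (ltnW lt_t)).
Qed.

Lemma block_run_canon qs ls x y z : accepting_run block_automaton qs ls x y z ->
  forall k, qs k = canon_state x y k /\ ls k = canon_label x y k.
Proof.
move=> [/eqP qs0 [run [[_ read_x] [[_ read_y] _]]]].
suff canon_upto n :
    qs n = canon_state x y n /\ forall k, (k < n)%N -> ls k = canon_label x y k.
  by move=> k; have [-> _] := canon_upto k; have [_ ->] := canon_upto k.+1.
elim: n => [|n [qs_n ls_lt]]; first by rewrite qs0 canon_state0.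
have nsyms_ls (lab : label3 A -> option A) :
    nsyms (fun k => lab (ls k)) n = nsyms (fun k => lab (canon_label x y k)) n.
  by apply: eq_nsyms => k lt_k; rewrite ls_lt.
have read_n : (n %% P < L)%N -> nsyms (fun k => lab1 (canon_label x y k)) n = read_pos n.
  by move=> phase_n; rewrite nsyms_canon_in /read_pos (minn_idPl (ltnW phase_n)).
have [ls_n qs_Sn] : ls n = canon_label x y n /\ qs n.+1 = canon_state x y n.+1.
  rewrite /canon_label canon_stateS; apply: block_delta_read; first by rewrite -qs_n.
  - by rewrite canon_phase => phase_n a /read_x <-; rewrite nsyms_ls read_n.
  - by rewrite canon_phase => phase_n b /read_y <-;
      rewrite nsyms_ls nsyms_canon_oracle read_n.
split=> // k; rewrite ltnS leq_eqVlt => /orP [/eqP -> //|]; exact: ls_lt.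
Qed.

Lemma block_compressor : compressor block_automaton.
Proof.
split; first exact: block_two_deterministic.
move=> y x x' z qs ls qs' ls' run run'.
have canon_out (x1 : nat -> A) qs1 ls1 : accepting_run block_automaton qs1 ls1 x1 y z ->
    spells (fun k => lab3 (canon_label x1 y k)) z.
  move=> run1; have -> : (fun k => lab3 (canon_label x1 y k)) = (fun k => lab3 (ls1 k)).
    by apply: funext => k; have [_ ->] := block_run_canon run1 k.
  by case: run1 => _ [_ [_ [_]]].
have blocks_eq j : word_block x j = word_block x' j.
  elim/ltn_ind: j => j IH.
  have out_len_eq : out_len x y j = out_len x' y j.
    by apply: eq_bigr => i _; rewrite /codeword IH.
  have stream_x : forall t, (t < size (codeword x y j))%N ->
      z (out_len x y j + t)%N = nth a0 (codeword x y j) t.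
    exact: canon_out_codeword (canon_out _ _ _ run) j.
  have stream_x' : forall t, (t < size (codeword x' y j))%N ->
      z (out_len x y j + t)%N = nth a0 (codeword x' y j) t.
    by rewrite out_len_eq; exact: canon_out_codeword (canon_out _ _ _ run') j.
  case/orP: (prefix_of_stream stream_x stream_x') => pre; [|apply/esym];
    by apply: code_prefix_free pre; apply: size_word_block.
apply: funext => p; have := congr1 (nth a0 ^~ (p %% L)) (blocks_eq (p %/ L)).
by rewrite /= !nth_mkseq ?ltn_pmod // -divn_eq.
Qed.

Lemma block_accepting_run x y :
  exists z, accepting_run block_automaton (canon_state x y) (canon_label x y) x y z.
Proof.
have [z out_z] := spells_exists a0 (canon_out_infinite x y).
exists z; split; first by rewrite /= canon_state0.
split; first by move=> k; rewrite canon_stateS; apply: block_deltaE.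
by split; [apply: canon_spells_in|split; [apply: canon_spells_oracle|]].
Qed.

Lemma block_run_ratio (R : realType) x y j :
  @run_ratio R A (canon_label x y) (j * P)%N = ((out_len x y j)%:R / (j * L)%:R)%:E.
Proof.
by rewrite /run_ratio nsyms_canon_out nsyms_canon_in mulnK // modnMl sub0n !min0n !addn0.
Qed.

End BlockCompressor.

Local Open Scope ring_scope.

Fixpoint words (A : finType) (n : nat) : seq (seq A) :=
  if n is n'.+1 then [seq a :: v | a <- enum A, v <- words A n'] else [:: [::]].
Arguments words : clear implicits.

Section Words.
Variable A : finType.

Lemma size_words n : size (words A n) = (#|A| ^ n)%N.
Proof. by elim: n => //= n IH; rewrite size_allpairs IH expnS cardE. Qed.

Lemma mem_words n u : (u \in words A n) = (size u == n).
Proof.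
elim: n u => [|n IH] u /=; first by rewrite inE; case: u.
apply/allpairsP/idP => [[[a v] /= [_ v_n ->]]|]; first by rewrite /= eqSS -IH.
by case: u => // a v /=; rewrite eqSS -IH => v_n; exists (a, v); rewrite mem_enum.
Qed.

Lemma uniq_words n : uniq (words A n).
Proof.
elim: n => //= n IH; apply: allpairs_uniq => //; first exact: enum_uniq.
by move=> [a v] [a' v'] _ _ /= [-> ->].
Qed.

End Words.

Section Discrepancy.
Variables (R : realType) (A : finType) (c c' d : A).

Definition disc (b a : A) : R := if b == d then (a == c)%:R - (a == c')%:R else 0.

Fixpoint block_disc (w u : seq A) : R :=
  if (w, u) is (b :: w', a :: u') then disc b a + block_disc w' u' else 0.

Lemma card_alphabet_gt0 : (0 < #|A|)%N.
Proof. by apply/card_gt0P; exists c. Qed.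

Lemma disc_le1 b a : disc b a <= 1.
Proof.
by rewrite /disc; case: (b == d) (a == c) (a == c') => [] [] []; rewrite /=; lra.
Qed.

Lemma disc_sqr_le b a : disc b a ^+ 2 <= (a == c)%:R + (a == c')%:R.
Proof.
by rewrite /disc; case: (b == d) (a == c) (a == c') => [] [] []; rewrite /= ?expr2; lra.
Qed.

Lemma block_disc_le w u : block_disc w u <= (size u)%:R.
Proof.
elim: w u => [|b w IH] [|a u] //=.
by rewrite -addn1 natrD addrC lerD ?disc_le1.
Qed.

Lemma sum_enum_eq1 (e : A) : \sum_(a <- enum A) ((a == e)%:R : R) = 1.
Proof.
rewrite (big_rem e) ?mem_enum //= eqxx big1_seq ?addr0 // => a /andP [_ a_rem].
by case: eqP a_rem => // ->; rewrite mem_rem_uniqF ?enum_uniq.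
Qed.

Lemma sum_disc b : \sum_(a <- enum A) disc b a = 0.
Proof.
rewrite /disc; case: eqP => _; last by rewrite big1.
by rewrite sumrB !sum_enum_eq1 subrr.
Qed.

Lemma sum_disc_sqr b : \sum_(a <- enum A) disc b a ^+ 2 <= 2.
Proof.
apply: le_trans (ler_sum _ (fun a _ => disc_sqr_le b a)) _.
by rewrite big_split /= !sum_enum_eq1.
Qed.

(* Summing over the first input letter kills the cross terms, by [sum_disc]. *)
Lemma sum_block_disc_sqr n w :
  \sum_(u <- words A n) block_disc w u ^+ 2 <= (2 * n * #|A| ^ n)%:R.
Proof.
elim: n w => [|n IH] w.
  by rewrite big_seq1 muln0; case: w => [|b w] /=; rewrite expr2 mulr0.
rewrite /= big_allpairs_dep /=; case: w => [|b w].
  by rewrite big1 // => a _; rewrite big1 // => v _; rewrite expr2 mulr0.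
have expand (a : A) : \sum_(v <- words A n) block_disc (b :: w) (a :: v) ^+ 2 =
      disc b a ^+ 2 * (#|A| ^ n)%:R
      + 2 * (disc b a * \sum_(v <- words A n) block_disc w v)
      + \sum_(v <- words A n) block_disc w v ^+ 2.
  rewrite -(size_words A n) -sum1_size natr_sum !mulr_sumr -!big_split /=.
  by apply: eq_bigr => v _; rewrite sqrrD mulr1 mulr_natl.
rewrite (eq_bigr _ (fun a _ => expand a)) !big_split /=.
rewrite -!mulr_suml -mulr_sumr -mulr_suml sum_disc mul0r mulr0 addr0.
rewrite [X in _ + X <= _]big_enum sumr_const -[_ *+ #|A|]mulr_natr.
apply: le_trans (lerD (ler_wpM2r (ler0n _ _) (sum_disc_sqr b))
                      (ler_wpM2r (ler0n _ _) (IH w))) _.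
rewrite -!natrM -natrD ler_nat expnS.
by move: (#|A| ^ n)%N card_alphabet_gt0 => K; move: #|A| => a; nia.
Qed.

Definition good_blocks (L : nat) (t : R) (w : seq A) : seq (seq A) :=
  [seq u <- words A L | t <= block_disc w u].

Lemma size_good_blocks_sqr L t w : 0 < t ->
  (size (good_blocks L t w))%:R * t ^+ 2 <= \sum_(u <- words A L) block_disc w u ^+ 2.
Proof.
move=> t_gt0; rewrite size_filter -sum1_count natr_sum mulr_suml.
rewrite [X in _ <= X](bigID (fun u => t <= block_disc w u)) /= -[X in X <= _]addr0.
apply: lerD; last by apply: sumr_ge0 => u _; apply: sqr_ge0.
by apply: ler_sum => u t_le; rewrite mul1r lerXn2r ?nnegrE // (le_trans (ltW t_gt0)).
Qed.

Lemma size_good_blocks L e (eps : R) w : (0 < L)%N -> 0 < eps -> (e <= L)%N ->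
  8 * (#|A| ^ e)%:R <= eps ^+ 2 * L%:R ->
  (size (good_blocks L (eps * L%:R / 2) w) <= #|A| ^ (L - e))%N.
Proof.
rewrite -(ltr0n R) => L_gt0 eps_gt0 le_eL large_L.
set t := eps * L%:R / 2.
have t_gt0 : 0 < t by rewrite divr_gt0 // mulr_gt0.
rewrite -(ler_nat R) -(ler_pM2r (exprn_gt0 2 t_gt0)).
apply: le_trans (size_good_blocks_sqr L w t_gt0) _.
apply: le_trans (sum_block_disc_sqr L w) _.
have -> : (#|A| ^ L)%N = (#|A| ^ (L - e) * #|A| ^ e)%N by rewrite -expnD subnK.
rewrite !natrM /t; set K := (#|A| ^ (L - e))%:R.
have K_ge0 : 0 <= K by [].
move: large_L; rewrite -subr_ge0 => /(mulr_ge0 (mulr_ge0 K_ge0 (ltW L_gt0))).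
nra.
Qed.

Section BlockCode.
Variables (L s : nat) (t : R).

Definition rank_word (w u : seq A) : seq A :=
  nth [::] (words A s) (index u (good_blocks L t w)).

Definition block_code (w u : seq A) : seq A :=
  if t <= block_disc w u then c :: rank_word w u else c' :: u.

Hypothesis c_neq_c' : c != c'.
Hypothesis few_good_blocks : forall w, (size (good_blocks L t w) <= #|A| ^ s)%N.

Lemma good_blocksP w u : size u = L -> t <= block_disc w u -> u \in good_blocks L t w.
Proof. by move=> u_L good_u; rewrite mem_filter good_u mem_words u_L eqxx. Qed.

Lemma index_good_blocks w u : size u = L -> t <= block_disc w u ->
  (index u (good_blocks L t w) < size (words A s))%N.
Proof.
move=> u_L good_u; rewrite size_words (leq_trans _ (few_good_blocks w)) //.
by rewrite index_mem good_blocksP.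
Qed.

Lemma size_rank_word w u : size u = L -> t <= block_disc w u -> size (rank_word w u) = s.
Proof.
move=> u_L good_u.
by have := mem_nth [::] (index_good_blocks u_L good_u); rewrite mem_words => /eqP.
Qed.

Lemma rank_word_inj w u u' : size u = L -> size u' = L ->
  t <= block_disc w u -> t <= block_disc w u' -> rank_word w u = rank_word w u' -> u = u'.
Proof.
move=> u_L u'_L good_u good_u' /eqP.
rewrite /rank_word nth_uniq ?index_good_blocks ?uniq_words // => /eqP same_rank.
by rewrite -(nth_index [::] (good_blocksP u_L good_u)) same_rank nth_index ?good_blocksP.
Qed.

Lemma size_block_code_good w u : size u = L -> t <= block_disc w u ->
  size (block_code w u) = s.+1.
Proof. by move=> u_L good_u; rewrite /block_code good_u /= size_rank_word. Qed.

Lemma size_block_code_bad w u : ~~ (t <= block_disc w u) ->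
  size (block_code w u) = (size u).+1.
Proof. by rewrite /block_code => /negbTE ->. Qed.

Lemma block_code_prefix_free w u u' : size u = L -> size u' = L ->
  prefix (block_code w u) (block_code w u') -> u = u'.
Proof.
move=> u_L u'_L; rewrite /block_code.
case: ifP => good_u; case: ifP => good_u'; rewrite prefix_cons ?eqxx //=.
- by move/prefix_size_eq; rewrite !size_rank_word // => /(_ erefl); apply: rank_word_inj.
- by rewrite (negbTE c_neq_c').
- by rewrite eq_sym (negbTE c_neq_c').
- by move/prefix_size_eq; rewrite u_L u'_L => /(_ erefl).
Qed.

End BlockCode.

End Discrepancy.

Section Compression.
Variables (R : realType) (A : finType) (x y : nat -> A) (c c' d : A).

Definition disc_sum (N : nat) : R := \sum_(0 <= i < N) disc R c c' d (y i) (x i).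

Lemma natr_card_ord_set N (P : pred nat) :
  (#|[set i : 'I_N | P i]|)%:R = \sum_(0 <= i < N) (P i)%:R :> R.
Proof.
rewrite -sum1_card natr_sum big_mkcond /= big_mkord; apply: eq_bigr => i _.
by rewrite unfold_in /= asboolb; case: (P i).
Qed.

Lemma joint_freqB N :
  joint_freq R x y c d N - joint_freq R x y c' d N = disc_sum N / N%:R.
Proof.
rewrite /joint_freq -mulrBl (natr_card_ord_set N (fun i => (x i == c) && (y i == d))).
rewrite (natr_card_ord_set N (fun i => (x i == c') && (y i == d))) -sumrB; congr (_ * _).
by apply: eq_bigr => i _; rewrite /disc; case: (y i == d); rewrite ?andbT ?andbF ?subrr.
Qed.

Lemma disc_sum_le N1 N2 : (N1 <= N2)%N -> disc_sum N2 <= disc_sum N1 + (N2 - N1)%:R.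
Proof.
move=> le_N12; rewrite /disc_sum (big_cat_nat (leq0n N1) le_N12) /= lerD2l.
apply: le_trans (ler_sum _ (fun i _ => disc_le1 R c c' d (y i) (x i))) _.
by rewrite sumr_const_nat.
Qed.

Lemma disc_sum_blocks L M :
  disc_sum (M * L) = \sum_(j < M) block_disc R c c' d (word_block L y j) (word_block L x j).
Proof.
rewrite /disc_sum big_nat_mul big_mkord; apply: eq_bigr => j _.
have iota_block (f : nat -> A) : word_block L f j = map f (iota (j * L) L).
  by rewrite /word_block /mkseq -{2}(addn0 (j * L)%N) iotaDl -map_comp.
rewrite !iota_block {iota_block} mulSn addnC.
elim: L (j * L)%N => [|L IH] i; first by rewrite big_geq ?addn0.
by rewrite big_ltn ?addnS ?ltnS ?leq_addr //= -addSn IH.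
Qed.

Variables (e L : nat) (eps : R).
Hypothesis L_gt0 : (0 < L)%N.
Hypothesis eps_gt0 : 0 < eps.
Hypothesis e_le_L : (e <= L)%N.
Hypothesis e_large : 6 <= e%:R * eps.
Hypothesis L_large : 8 * (#|A| ^ e)%:R <= eps ^+ 2 * L%:R.

Local Notation t := (eps * L%:R / 2).
Local Notation code := (block_code c c' d L (L - e) t).

Let few_good_blocks w : (size (good_blocks c c' d L t w) <= #|A| ^ (L - e))%N :=
  size_good_blocks c c' d w L_gt0 eps_gt0 e_le_L L_large.

Definition good_block j : bool :=
  t <= block_disc R c c' d (word_block L y j) (word_block L x j).

Lemma size_block_code_bounds w u : size u = L -> (0 < size (code w u) <= L.+1)%N.
Proof.
move=> u_L; case: (boolP (t <= block_disc R c c' d w u)) => [good_u|bad_u].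
  by rewrite (size_block_code_good few_good_blocks u_L good_u) /= ltnS leq_subr.
by rewrite (size_block_code_bad _ _ bad_u) u_L /= leqnn.
Qed.

Lemma natr_out_len M :
  (out_len L code x y M)%:R
  = M%:R * L.+1%:R - e%:R * \sum_(j < M) (good_block j)%:R :> R.
Proof.
have -> : M%:R * L.+1%:R = \sum_(j < M) L.+1%:R :> R.
  by rewrite sumr_const card_ord mulr_natl.
rewrite /out_len natr_sum mulr_sumr -sumrB.
apply: eq_bigr => j _; rewrite /codeword.
case: (boolP (good_block j)) => [good_j|bad_j]; last first.
  by rewrite (size_block_code_bad _ _ bad_j) size_word_block mulr0 subr0.
rewrite (size_block_code_good few_good_blocks (size_word_block _ _ _) good_j) mulr1.
by rewrite -addn1 natrD natrB // -natr1; lra.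
Qed.

Lemma disc_sum_le_good M :
  disc_sum (M * L) <= L%:R * \sum_(j < M) (good_block j)%:R + M%:R * t.
Proof.
have -> : M%:R * t = \sum_(j < M) t by rewrite sumr_const card_ord mulr_natl.
rewrite disc_sum_blocks mulr_sumr -big_split /=.
apply: ler_sum => j _; case: (boolP (good_block j)) => [_|bad_j]; last first.
  by rewrite mulr0 add0r ltW // ltNge.
rewrite mulr1 -[X in X <= _]addr0 lerD //; last by rewrite divr_ge0 // mulr_ge0 // ltW.
by rewrite -[in X in _ <= X](size_word_block L x j) block_disc_le.
Qed.

Lemma out_len_le N : (e * L <= N)%N -> eps * N%:R < disc_sum N ->
  (out_len L code x y (N %/ L))%:R <= (N %/ L * L)%:R - (N %/ L)%:R :> R.
Proof.
move=> eL_le_N disc_N; rewrite natr_out_len natrM.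
set M := (N %/ L)%N; set g := \sum_(j < M) (good_block j)%:R.
have L_pos : 0 < L%:R :> R by rewrite ltr0n.
have e_le_M : e%:R <= M%:R :> R by rewrite ler_nat leq_divRL.
have ML_le_N : (M * L <= N)%N by rewrite leq_divM.
have ML_le_N' : M%:R * L%:R <= N%:R :> R by rewrite -natrM ler_nat.
have rest_le_L : N%:R - M%:R * L%:R <= L%:R :> R.
  by rewrite -natrM -natrB // ler_nat {1}(divn_eq N L) addKn ltnW ?ltn_pmod.
have many_good : eps * M%:R < 2 * g + 2.
  have := disc_sum_le ML_le_N; have := disc_sum_le_good M.
  rewrite natrB // !natrM -/g -(ltr_pM2l L_pos).
  have := ler_wpM2l (ltW eps_gt0) ML_le_N'; nra.
have many_good_e : 2 * M%:R <= e%:R * g.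
  have := ler_wpM2l (ler0n _ e) (ltW many_good).
  have := ler_wpM2r (ler0n _ M) e_large; nra.
rewrite -natr1; lra.
Qed.

Lemma block_run_ratio_le n : (e.+1 * L <= n)%N -> eps * n%:R < disc_sum n ->
  (run_ratio R (canon_label L c code x y) (n %/ L * (L + L).+1) <= (1 - L%:R^-1)%:E)%E.
Proof.
move=> le_n disc_n.
have M_gt0 : (0 < n %/ L)%N by rewrite divn_gt0 // (leq_trans _ le_n) // leq_pmull.
rewrite (block_run_ratio c L_gt0 size_block_code_bounds) lee_fin.
rewrite ler_pdivrMr ?ltr0n ?muln_gt0 ?M_gt0 //.
apply: le_trans (out_len_le _ disc_n) _.
  by apply: leq_trans le_n; rewrite leq_mul2r leqnSn orbT.
by rewrite natrM mulrBl mul1r mulrCA mulVf ?mulr1 // lt0r_neq0 // ltr0n.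
Qed.

End Compression.

Lemma exists_block_params (R : realType) (k : nat) (eps : R) : 0 < eps ->
  exists e L : nat,
    [/\ (0 < L)%N, (e <= L)%N, 6 <= e%:R * eps & 8 * (k ^ e)%:R <= eps ^+ 2 * L%:R].
Proof.
move=> eps_gt0; set e := (Num.truncn (6 / eps)).+1.
exists e, (e + Num.truncn (8 * (k ^ e)%:R / eps ^+ 2)).+1; split=> //.
- by rewrite leqW // leq_addr.
- by rewrite -ler_pdivrMr // ltW // truncnS_gt.
have := truncnS_gt (8 * (k ^ e)%:R / eps ^+ 2).
rewrite ltr_pdivrMr ?exprn_gt0 // => /ltW le_8; apply: le_trans le_8 _.
by rewrite mulrC ler_pM2l ?exprn_gt0 // ler_nat ltnS leq_addl.
Qed.

Lemma rho_lt1_of_disc_sum (R : realType) (A : finType) (x y : nat -> A) (c c' d : A)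
    (eps : R) :
  0 < eps -> (forall N, exists2 n, (N <= n)%N & eps * n%:R < disc_sum R x y c c' d n) ->
  (rho R x y < 1)%E.
Proof.
move=> eps_gt0 often.
have c_neq_c' : c != c'.
  apply/eqP => same_c; have [n _] := often 0%N.
  rewrite /disc_sum big1 => [|i _]; last by rewrite /disc same_c subrr; case: ifP.
  by rewrite ltNge mulr_ge0 // ltW.
have [e [L [L_gt0 e_le_L e_large L_large]]] := exists_block_params #|A| eps_gt0.
have size_code := size_block_code_bounds c c' d L_gt0 eps_gt0 e_le_L L_large.
have prefix_free := block_code_prefix_free c_neq_c'
  (fun w => size_good_blocks c c' d w L_gt0 eps_gt0 e_le_L L_large).
have [z run] := block_accepting_run c L_gt0 size_code x y.
apply: le_lt_trans (rho_le_run R (block_compressor c L_gt0 size_code prefix_free) run) _.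
apply: (@le_lt_trans _ _ (1 - L%:R^-1)%:E); last first.
  by rewrite lte_fin ltrBlDr ltrDl invr_gt0 ltr0n.
apply: limn_einf_le_frequently => N.
have [n le_n disc_n] := often ((N + e.+1) * L)%N.
exists (n %/ L * (L + L).+1)%N.
  by rewrite (leq_trans _ (leq_pmulr _ (ltn0Sn _))) // leq_divRL //; nia.
apply: (block_run_ratio_le L_gt0 eps_gt0 e_le_L e_large L_large _ disc_n).
by apply: leq_trans le_n; rewrite leq_mul2r leq_addl orbT.
Qed.

Theorem proposition4 (R : realType) (A : finType) (x y : nat -> A) (c c' d : A)
  (m : nat -> nat) :
  (forall n, (m n < m n.+1)%N) ->
  (exists l l' : R,
     (fun n => @joint_freq R A x y c d (m n)) @ \oo --> l /\
     (fun n => @joint_freq R A x y c' d (m n)) @ \oo --> l' /\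
     l != l') ->
  (@rho R A x y < 1)%E.
Proof.
move=> m_incr [l [l' [cv [cv' l_neq]]]].
have m_ge n : (n <= m n)%N by elim: n => // n IH; apply: leq_ltn_trans IH (m_incr n).
wlog lt_l'l : c c' l l' cv cv' {l_neq} / l' < l.
  move=> W; case: (ltgtP l l') l_neq => // lt_l _.
    exact: W c' c l' l cv' cv lt_l.
  exact: W c c' l l' cv cv' lt_l.
pose eps := (l - l') / 2.
have cv_diff : (fun n => joint_freq R x y c d (m n) - joint_freq R x y c' d (m n))
    @ \oo --> l - l' by apply: cvgB.
have eps_lt : eps < l - l' by rewrite /eps; lra.
have [N0 _ diff_gt] := cvgr_gt _ cv_diff eps eps_lt.
apply: (@rho_lt1_of_disc_sum _ _ x y c c' d eps); first by rewrite /eps; lra.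
move=> N; exists (m (maxn N N0).+1).
  by apply: leq_trans (m_ge _); rewrite leqW ?leq_maxl.
have m_gt0 : (0 < m (maxn N N0).+1)%N by apply: leq_trans (m_ge _).
have := diff_gt (maxn N N0).+1; rewrite /= joint_freqB ltr_pdivlMr ?ltr0n //; apply.
by rewrite leqW ?leq_maxr.
Qed.
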